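(* Let $m\ge 1$, let $t_1<\cdots<t_m$ be real, and let $\omega_0,\dots,\omega_m$ be real numbers with $\sum_{k=0}^{\ell}\omega_k\ge 0$ for $\ell=0,\dots,m$ and such that $w(x)={\rm e}^{-x^2}\big(\omega_0+\sum_{k=1}^m\omega_k\theta(x-t_k)\big)$ is not identically zero. With $R_{n,k},r_{n,k}$ as in the context, the following hold: $$r_{n+1,k}=-r_{n,k}+\Big(t_k-\frac12\sum_{j=1}^mR_{n,j}\Big)R_{n,k},\qquad n\ge0,\ k=1,\dots,m,$$ and, for $n\ge1$ (whenever the denominators are nonzero), $$R_{n,1}=\frac{2r_{n,1}^2}{\Big(\sum_{k=1}^m r_{n,k}+n\Big)R_{n-1,1}},\qquad R_{n,k}=\frac{r_{n,k}^2R_{n-1,1}}{r_{n,1}^2R_{n-1,k}}R_{n,1},\quad k=2,\dots,m,$$ with initial values $$R_{0,k}=\frac{\omega_k{\rm e}^{-t_k^2}}{\int_{-\infty}^{+\infty}{\rm e}^{-x^2}\big(\omega_0+\sum_{j=1}^m\omega_j\theta(x-t_j)\big)dx},\qquad r_{0,k}=0.$$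
   Context: $\theta(y)=1$ for $y>0$ and $0$ otherwise. $P_n$ ($n\ge0$) is the monic degree-$n$ polynomial orthogonal with respect to $w$ on $\mathbb{R}$, $\int P_jP_kw\,dx=h_k\delta_{jk}$, $h_k>0$. For $k=1,\dots,m$: $R_{n,k}:=\omega_k{\rm e}^{-t_k^2}P_n(t_k)^2/h_n$ for $n\ge0$; $r_{n,k}:=\omega_k{\rm e}^{-t_k^2}P_n(t_k)P_{n-1}(t_k)/h_{n-1}$ for $n\ge1$, and $r_{0,k}:=0$. *)

From Stdlib Require Import Reals.
From Coquelicot Require Import Coquelicot.
Open Scope R_scope.

Definition theta (y : R) : R := if Rlt_dec 0 y then 1 else 0.

Fixpoint sum1 (f : nat -> R) (m : nat) : R :=
  match m with
  | O => 0
  | S m' => sum1 f m' + f (S m')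
  end.

Definition sum0 (f : nat -> R) (l : nat) : R := f O + sum1 f l.

Definition weight (m : nat) (om t : nat -> R) (x : R) : R :=
  exp (- x ^ 2) * (om O + sum1 (fun k => om k * theta (x - t k)) m).

Fixpoint psum (c : nat -> R) (n : nat) (x : R) : R :=
  match n with
  | O => 0
  | S n' => psum c n' x + c n' * x ^ n'
  end.

Definition Pmon (c : nat -> nat -> R) (n : nat) (x : R) : R :=
  x ^ n + psum (c n) n x.

Definition Rnk (om t : nat -> R) (c : nat -> nat -> R) (h : nat -> R)
  (n k : nat) : R :=
  om k * exp (- (t k) ^ 2) * (Pmon c n (t k)) ^ 2 / h n.

Definition rnk (om t : nat -> R) (c : nat -> nat -> R) (h : nat -> R)
  (n k : nat) : R :=
  match n with
  | O => 0
  | S n' => om k * exp (- (t k) ^ 2) * Pmon c n (t k) * Pmon c n' (t k) / h n'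
  end.

(** The monic orthogonal polynomials satisfy the three-term recurrence
    [P_{n+1} = (x - α_n) P_n - β_n P_{n-1}], with [α_n = ∫ x P_n² w / h_n] and
    [β_n = h_n / h_{n-1}]; evaluated at [t_k] it gives the recurrence for [r_{n,k}] once
    [α_n] is expressed through the [R_{n,j}]. That comes from integrating by parts:
    since [(e^{-x²} Q)' = (Q' - 2xQ) e^{-x²}] and each step [θ(x - t_k)] of [w]
    contributes a boundary term, [∫ (Q' - 2xQ) w = - Σ_k ω_k e^{-t_k²} Q(t_k)] for every
    polynomial [Q]. For [Q = P_n²] orthogonality turns this into [Σ_k R_{n,k} = 2 α_n],
    and for [Q = P_n P_{n+1}] into [Σ_k r_{n+1,k} + n + 1 = 2 h_{n+1} / h_n]. The
    formulas for [R_{n,k}] then follow from [r_{n,k}² = R_{n,k} R_{n-1,k} h_n / h_{n-1}]. *)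

From Stdlib Require Import Reals Factorial Lra Lia Psatz.
From Coquelicot Require Import Coquelicot.
Open Scope R_scope.

Local Notation Fm := (Rbar_locally m_infty).
Local Notation Fp := (Rbar_locally p_infty).

Lemma psum_ext a b N x :
  (forall i, (i < N)%nat -> a i = b i) -> psum a N x = psum b N x.
Proof.
  induction N as [|N IH]; intros Hab; simpl; [reflexivity|].
  rewrite IH by (intros i Hi; apply Hab; lia). now rewrite (Hab N) by lia.
Qed.

Lemma psum_scal k a N x : psum (fun i => k * a i) N x = k * psum a N x.
Proof. induction N as [|N IH]; simpl; [|rewrite IH]; ring. Qed.

Lemma psum_minus a b N x :
  psum (fun i => a i - b i) N x = psum a N x - psum b N x.
Proof. induction N as [|N IH]; simpl; [|rewrite IH]; ring. Qed.

Lemma psum_zero_tail a N K x :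
  (forall i, (N <= i)%nat -> a i = 0) -> (N <= K)%nat -> psum a K x = psum a N x.
Proof.
  intros Ha HK. induction HK as [|K HK IH]; [reflexivity|].
  simpl. rewrite IH, (Ha K) by exact HK. ring.
Qed.

Definition Pcoef (c : nat -> nat -> R) (n i : nat) : R :=
  if Nat.ltb i n then c n i else if Nat.eqb i n then 1 else 0.

Lemma Pcoef_diag c n : Pcoef c n n = 1.
Proof. unfold Pcoef. now rewrite Nat.ltb_irrefl, Nat.eqb_refl. Qed.

Lemma Pcoef_gt c n i : (n < i)%nat -> Pcoef c n i = 0.
Proof.
  intros Hi. unfold Pcoef.
  destruct (Nat.ltb_spec i n), (Nat.eqb_spec i n); now try lia.
Qed.

Lemma psum_Pcoef c n N x : (n < N)%nat -> psum (Pcoef c n) N x = Pmon c n x.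
Proof.
  intros HN. rewrite (psum_zero_tail _ (S n)); [|intros i Hi; apply Pcoef_gt; lia | exact HN].
  unfold Pmon. simpl. rewrite Pcoef_diag, (psum_ext _ (c n)); [ring|].
  intros i Hi. unfold Pcoef. now rewrite (proj2 (Nat.ltb_lt i n) Hi).
Qed.

Lemma psum_S_Pmon c a N x :
  psum a (S N) x = a N * Pmon c N x + psum (fun i => a i - a N * c N i) N x.
Proof. rewrite psum_minus, psum_scal. unfold Pmon. simpl. ring. Qed.

Definition coef_mulX (a : nat -> R) (i : nat) : R :=
  match i with O => 0 | S j => a j end.

Lemma psum_mulX a N x : psum (coef_mulX a) (S N) x = x * psum a N x.
Proof. induction N as [|N IH]; simpl in *; [|rewrite IH]; ring. Qed.

Lemma mulX_Pmon c n x : x * Pmon c n x = psum (coef_mulX (Pcoef c n)) (S (S n)) x.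
Proof. now rewrite psum_mulX, psum_Pcoef by lia. Qed.

Definition coef_deriv (a : nat -> R) (i : nat) : R := INR (S i) * a (S i).

Lemma is_derive_psum a N x : is_derive (psum a N) x (psum (coef_deriv a) (pred N) x).
Proof.
  induction N as [|N IH]; simpl; [auto_derive; auto|].
  replace (psum (coef_deriv a) N x)
    with (psum (coef_deriv a) (pred N) x + a N * (INR N * x ^ pred N)).
  - apply (is_derive_plus (psum a N) (fun y => a N * y ^ N)); [exact IH|].
    auto_derive; auto. ring.
  - destruct N; [simpl; ring|]. cbn [pred psum]. unfold coef_deriv. ring.
Qed.

Lemma Rabs_lt_1_plus_sq x : Rabs x < 1 + x ^ 2.
Proof. destruct (Rabs_pos x); rewrite <- Rsqr_pow2, Rsqr_abs, Rsqr_pow2; nra. Qed.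

Lemma psum_growth a N :
  exists C, 0 <= C /\ forall x, Rabs (psum a N x) <= C * (1 + x ^ 2) ^ N.
Proof.
  induction N as [|N [C [HC IH]]].
  - exists 0. split; [lra|]. intros x. simpl. rewrite Rabs_R0. lra.
  - exists (C + Rabs (a N)). split; [pose proof (Rabs_pos (a N)); lra|].
    intros x. simpl psum.
    assert (Hx : Rabs x <= 1 + x ^ 2) by (left; apply Rabs_lt_1_plus_sq).
    assert (HxN : Rabs x ^ N <= (1 + x ^ 2) ^ N)
      by (apply pow_incr; split; [apply Rabs_pos | exact Hx]).
    assert (Hmono : (1 + x ^ 2) ^ N <= (1 + x ^ 2) ^ S N) by (apply Rle_pow; [nra | lia]).
    pose proof (IH x). pose proof (Rabs_pos (a N)).
    assert (0 <= (1 + x ^ 2) ^ N) by (apply pow_le; nra).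
    eapply Rle_trans; [apply Rabs_triang|].
    rewrite Rabs_mult, <- RPow_abs. nra.
Qed.

Definition dPmon (c : nat -> nat -> R) (n : nat) (x : R) : R :=
  psum (coef_deriv (Pcoef c n)) n x.

Lemma is_derive_Pmon c n x : is_derive (Pmon c n) x (dPmon c n x).
Proof.
  apply (is_derive_ext (psum (Pcoef c n) (S n))); [intros y; apply psum_Pcoef; lia|].
  apply is_derive_psum.
Qed.

Lemma Pmon_growth c n :
  exists C, 0 <= C /\ forall x, Rabs (Pmon c n x) <= C * (1 + x ^ 2) ^ S n.
Proof.
  destruct (psum_growth (Pcoef c n) (S n)) as [C [HC H]].
  exists C. split; [exact HC|]. intros x. rewrite <- (psum_Pcoef c n (S n)) by lia. apply H.
Qed.

Lemma pow_le_fact_exp y n : 0 <= y -> y ^ n <= INR (fact n) * exp y.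
Proof.
  intros Hy. pose proof (INR_fact_lt_0 n) as Hfact.
  assert (Hterm : y ^ n / INR (fact n) <= exp y).
  { eapply Rle_trans; [|exact (exp_ge_taylor y n Hy)].
    destruct n as [|n]; [apply Rle_refl|]. cbn [sum_f_R0].
    enough (0 <= sum_f_R0 (fun k => y ^ k / INR (fact k)) n) by lra.
    apply cond_pos_sum. intros k.
    apply Rdiv_le_0_compat; [apply pow_le, Hy | apply INR_fact_lt_0]. }
  apply Rle_div_l in Hterm; lra.
Qed.

Lemma gauss_mul_growth_le (Q : R -> R) C K :
  0 <= C -> (forall x, Rabs (Q x) <= C * (1 + x ^ 2) ^ K) ->
  exists D, forall x, Rabs (Q x * exp (- x ^ 2)) <= D / (1 + x ^ 2).
Proof.
  intros HC HQ.
  (* [(1 + x²)^{K+1} ≤ (K+1)! e^{1 + x²}] *)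
  exists (C * (INR (fact (S K)) * exp 1)). intros x.
  set (y := 1 + x ^ 2). assert (Hy : 1 <= y) by (unfold y; nra).
  assert (Hgauss : y ^ S K * exp (- x ^ 2) <= INR (fact (S K)) * exp 1).
  { replace (exp (- x ^ 2)) with (exp 1 / exp y)
      by (unfold y, Rdiv; rewrite <- exp_Ropp, <- exp_plus; f_equal; ring).
    pose proof (pow_le_fact_exp y (S K) ltac:(lra)). pose proof (exp_pos y). pose proof (exp_pos 1).
    replace (y ^ S K * (exp 1 / exp y)) with (y ^ S K / exp y * exp 1) by (field; lra).
    apply Rmult_le_compat_r; [lra|]. apply Rle_div_l; lra. }
  rewrite Rabs_mult, (Rabs_right (exp _)) by (left; apply exp_pos).
  apply Rle_trans with (C * y ^ K * exp (- x ^ 2)).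
  { apply Rmult_le_compat_r; [left; apply exp_pos | apply HQ]. }
  apply (Rle_div_r _ _ y); [lra|].
  replace (C * y ^ K * exp (- x ^ 2) * y) with (C * (y ^ S K * exp (- x ^ 2))) by (simpl; ring).
  apply Rmult_le_compat_l; assumption.
Qed.

Lemma filterlim_0_of_inv_sq_bound (f : R -> R) D :
  (forall x, Rabs (f x) <= D / (1 + x ^ 2)) ->
  filterlim f Fm (locally 0) /\ filterlim f Fp (locally 0).
Proof.
  intros Hf.
  assert (Hsmall : forall eps : posreal, forall x, D / eps < Rabs x -> Rabs (f x - 0) < eps).
  { intros eps x Hx. pose proof (cond_pos eps).
    pose proof (Rabs_lt_1_plus_sq x) as Hax.
    rewrite Rminus_0_r. eapply Rle_lt_trans; [apply Hf|].
    assert (HD : D < eps * Rabs x).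
    { replace D with (eps * (D / eps)) by (field; lra). apply Rmult_lt_compat_l; lra. }
    apply (Rmult_lt_reg_r (1 + x ^ 2)); [nra|].
    replace (D / (1 + x ^ 2) * (1 + x ^ 2)) with D by (field; nra). nra. }
  split; apply filterlim_locally; intros eps.
  - exists (- Rabs (D / eps)). intros x Hx. apply Hsmall.
    pose proof (Rle_abs (D / eps)). pose proof (Rabs_pos (D / eps)).
    rewrite Rabs_left; lra.
  - exists (Rabs (D / eps)). intros x Hx. apply Hsmall.
    pose proof (Rle_abs (D / eps)). pose proof (Rabs_pos (D / eps)).
    rewrite Rabs_right; lra.
Qed.

Lemma is_RInt_gen_ext_pointwise {Fa Fb : (R -> Prop) -> Prop} {FFa : Filter Fa} {FFb : Filter Fb}
  (f g : R -> R) (l : R) :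
  (forall x, f x = g x) -> is_RInt_gen f Fa Fb l -> is_RInt_gen g Fa Fb l.
Proof. intros Hfg. apply is_RInt_gen_ext, filter_forall. intros ab x _. apply Hfg. Qed.

Lemma is_RInt_gen_derive {Fa Fb : (R -> Prop) -> Prop} {FFa : Filter Fa} {FFb : Filter Fb}
  (F F' : R -> R) (la lb : R) :
  (forall x, is_derive F x (F' x)) -> (forall x, continuous F' x) ->
  filterlim F Fa (locally la) -> filterlim F Fb (locally lb) ->
  is_RInt_gen F' Fa Fb (lb - la).
Proof.
  intros HD HC Ha Hb.
  assert (HDF : forall x, F' x = Derive F x) by (intros x; symmetry; apply is_derive_unique, HD).
  apply (is_RInt_gen_ext_pointwise (Derive F)); [intros x; now rewrite HDF|].
  apply is_RInt_gen_Derive; try assumption; apply filter_forall; intros ab x _.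
  - eexists; apply HD.
  - exact (continuous_ext _ _ x HDF (HC x)).
Qed.

Lemma filterlim_at_point (F : R -> R) s : filterlim F (at_point s) (locally (F s)).
Proof. intros P HP. unfold filtermap, at_point. exact (locally_singleton _ _ HP). Qed.

Lemma is_RInt_gen_theta (F F' : R -> R) (s : R) :
  (forall x, is_derive F x (F' x)) -> (forall x, continuous F' x) ->
  filterlim F Fm (locally 0) -> filterlim F Fp (locally 0) ->
  is_RInt_gen (fun x => theta (x - s) * F' x) Fm Fp (- F s).
Proof.
  intros HD HC Hm Hp.
  replace (- F s) with (plus (0 * (F s - 0)) (0 - F s)) by (unfold plus; simpl; ring).
  apply (is_RInt_gen_Chasles (V := R_NormedModule) _ s).
  - apply (is_RInt_gen_ext (fun x => 0 * F' x)).
    + exists (fun a => a < s) (fun b => b = s); [now exists s | reflexivity |].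
      intros a b Ha -> x Hx. simpl in Hx. rewrite Rmax_right in Hx by lra.
      unfold theta. destruct (Rlt_dec 0 (x - s)); [lra | reflexivity].
    + exact (is_RInt_gen_scal _ 0 _
               (is_RInt_gen_derive F F' 0 (F s) HD HC Hm (filterlim_at_point F s))).
  - apply (is_RInt_gen_ext F').
    + exists (fun a => a = s) (fun b => s < b); [reflexivity | now exists s |].
      intros a b -> Hb x Hx. simpl in Hx. rewrite Rmin_left in Hx by lra.
      unfold theta. destruct (Rlt_dec 0 (x - s)); [now rewrite Rmult_1_l | lra].
    + exact (is_RInt_gen_derive F F' (F s) 0 HD HC (filterlim_at_point F s) Hp).
Qed.

Lemma is_RInt_gen_mul_step (F F' : R -> R) m om t :
  (forall x, is_derive F x (F' x)) -> (forall x, continuous F' x) ->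
  filterlim F Fm (locally 0) -> filterlim F Fp (locally 0) ->
  is_RInt_gen (fun x => F' x * (om O + sum1 (fun k => om k * theta (x - t k)) m)) Fm Fp
    (- sum1 (fun k => om k * F (t k)) m).
Proof.
  intros HD HC Hm Hp. induction m as [|m IH]; simpl.
  - apply (is_RInt_gen_ext_pointwise (fun x => om O * F' x)); [intros x; ring|].
    replace (- 0) with (om O * (0 - 0)) by ring.
    exact (is_RInt_gen_scal _ (om O) _ (is_RInt_gen_derive F F' 0 0 HD HC Hm Hp)).
  - apply (is_RInt_gen_ext_pointwise
             (fun x => plus (F' x * (om O + sum1 (fun k => om k * theta (x - t k)) m))
                            (om (S m) * (theta (x - t (S m)) * F' x)))).
    { intros x. unfold plus. simpl. ring. }
    replace (- (sum1 (fun k => om k * F (t k)) m + om (S m) * F (t (S m))))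
      with (plus (- sum1 (fun k => om k * F (t k)) m) (om (S m) * - F (t (S m))))
      by (unfold plus; simpl; ring).
    exact (is_RInt_gen_plus _ _ _ _ IH
             (is_RInt_gen_scal _ (om (S m)) _ (is_RInt_gen_theta F F' (t (S m)) HD HC Hm Hp))).
Qed.

Definition is_RInt_weighted (w f : R -> R) (l : R) : Prop :=
  is_RInt_gen (fun x => f x * w x) Fm Fp l.

Lemma is_RInt_weighted_ext {w f g : R -> R} {l l' : R} :
  (forall x, f x = g x) -> l = l' -> is_RInt_weighted w f l -> is_RInt_weighted w g l'.
Proof.
  intros Hfg <-. unfold is_RInt_weighted. apply is_RInt_gen_ext_pointwise.
  intros x. now rewrite Hfg.
Qed.

Lemma is_RInt_weighted_plus {w f g : R -> R} {lf lg : R} :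
  is_RInt_weighted w f lf -> is_RInt_weighted w g lg ->
  is_RInt_weighted w (fun x => f x + g x) (lf + lg).
Proof.
  intros Hf Hg. unfold is_RInt_weighted in *.
  apply (is_RInt_gen_ext_pointwise (fun x => f x * w x + g x * w x)); [intros x; ring|].
  exact (is_RInt_gen_plus _ _ _ _ Hf Hg).
Qed.

Lemma is_RInt_weighted_minus {w f g : R -> R} {lf lg : R} :
  is_RInt_weighted w f lf -> is_RInt_weighted w g lg ->
  is_RInt_weighted w (fun x => f x - g x) (lf - lg).
Proof.
  intros Hf Hg. unfold is_RInt_weighted in *.
  apply (is_RInt_gen_ext_pointwise (fun x => f x * w x - g x * w x)); [intros x; ring|].
  exact (is_RInt_gen_minus _ _ _ _ Hf Hg).
Qed.

Lemma is_RInt_weighted_scal {w f : R -> R} {l : R} (k : R) :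
  is_RInt_weighted w f l -> is_RInt_weighted w (fun x => k * f x) (k * l).
Proof.
  intros Hf. unfold is_RInt_weighted in *.
  apply (is_RInt_gen_ext_pointwise (fun x => k * (f x * w x))); [intros x; ring|].
  exact (is_RInt_gen_scal _ k _ Hf).
Qed.

Lemma is_RInt_weighted_unique {w f : R -> R} {l l' : R} :
  is_RInt_weighted w f l -> is_RInt_weighted w f l' -> l = l'.
Proof.
  intros H H'. unfold is_RInt_weighted in *.
  now rewrite <- (is_RInt_gen_unique _ _ H), <- (is_RInt_gen_unique _ _ H').
Qed.

Lemma is_RInt_weighted_gauss_ibp m om t (Q dQ : R -> R) C K :
  (forall x, is_derive Q x (dQ x)) -> (forall x, continuous dQ x) ->
  0 <= C -> (forall x, Rabs (Q x) <= C * (1 + x ^ 2) ^ K) ->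
  is_RInt_weighted (weight m om t) (fun x => dQ x - 2 * x * Q x)
    (- sum1 (fun k => om k * (Q (t k) * exp (- t k ^ 2))) m).
Proof.
  intros HD HCd HC HQ.
  destruct (gauss_mul_growth_le Q C K HC HQ) as [D HD'].
  destruct (filterlim_0_of_inv_sq_bound _ D HD') as [Hm Hp].
  assert (Hgauss : forall x, is_derive (fun y => exp (- y ^ 2)) x (- (2 * x) * exp (- x ^ 2))).
  { intros x. auto_derive; [auto|]. simpl. ring. }
  assert (HF : forall x, is_derive (fun y => Q y * exp (- y ^ 2)) x
                                   ((dQ x - 2 * x * Q x) * exp (- x ^ 2))).
  { intros x.
    replace ((dQ x - 2 * x * Q x) * exp (- x ^ 2))
      with (plus (mult (dQ x) (exp (- x ^ 2))) (mult (Q x) (- (2 * x) * exp (- x ^ 2))))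
      by (unfold plus, mult; simpl; ring).
    exact (is_derive_mult Q _ x _ _ (HD x) (Hgauss x) Rmult_comm). }
  assert (HCF : forall x, continuous (fun y => (dQ y - 2 * y * Q y) * exp (- y ^ 2)) x).
  { intros x.
    apply (continuous_mult (fun y => dQ y - 2 * y * Q y) (fun y => exp (- y ^ 2)));
      [| apply (ex_derive_continuous (V := R_NormedModule)); eexists; apply Hgauss].
    apply (continuous_plus dQ (fun y => - (2 * y * Q y))); [apply HCd|].
    apply (continuous_opp (fun y => 2 * y * Q y)).
    apply (continuous_mult (fun y => 2 * y) Q);
      [| apply (ex_derive_continuous (V := R_NormedModule)); eexists; apply HD].
    apply (ex_derive_continuous (V := R_NormedModule)). auto_derive. auto. }
  unfold is_RInt_weighted.
  refine (is_RInt_gen_ext_pointwise _ _ _ _ (is_RInt_gen_mul_step _ _ m om t HF HCF Hm Hp)).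
  intros x. unfold weight. ring.
Qed.

Lemma is_RInt_weighted_Pmon_ibp m om t c p q :
  is_RInt_weighted (weight m om t)
    (fun x => dPmon c p x * Pmon c q x + Pmon c p x * dPmon c q x
              - 2 * x * (Pmon c p x * Pmon c q x))
    (- sum1 (fun k => om k * (Pmon c p (t k) * Pmon c q (t k) * exp (- t k ^ 2))) m).
Proof.
  destruct (Pmon_growth c p) as [C1 [HC1 H1]].
  destruct (Pmon_growth c q) as [C2 [HC2 H2]].
  apply (is_RInt_weighted_gauss_ibp m om t (fun x => Pmon c p x * Pmon c q x) _
           (C1 * C2) (S p + S q)).
  - intros x. exact (is_derive_mult (Pmon c p) (Pmon c q) x _ _
                       (is_derive_Pmon c p x) (is_derive_Pmon c q x) Rmult_comm).
  - intros x. apply (ex_derive_continuous (V := R_NormedModule)).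
    assert (HP : forall n, ex_derive (Pmon c n) x) by (intros n; eexists; apply is_derive_Pmon).
    assert (HdP : forall n, ex_derive (dPmon c n) x) by (intros n; eexists; apply is_derive_psum).
    apply (ex_derive_plus (fun y => dPmon c p y * Pmon c q y) (fun y => Pmon c p y * dPmon c q y));
      apply ex_derive_mult; auto.
  - now apply Rmult_le_pos.
  - intros x. rewrite Rabs_mult, pow_add.
    replace (C1 * C2 * ((1 + x ^ 2) ^ S p * (1 + x ^ 2) ^ S q))
      with (C1 * (1 + x ^ 2) ^ S p * (C2 * (1 + x ^ 2) ^ S q)) by ring.
    apply Rmult_le_compat; auto using Rabs_pos.
Qed.

(** [β_0 = 0], so the junk value [n - 1 = 0] at [n = 0] in [Pmon_three_term] is harmless. *)
Definition beta (h : nat -> R) (n : nat) : R :=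
  match n with O => 0 | S p => h (S p) / h p end.

Section OrthogonalPolynomials.

Variables (w : R -> R) (c : nat -> nat -> R) (h : nat -> R).

Hypothesis Pmon_orth : forall j k : nat,
  is_RInt_weighted w (fun x => Pmon c j x * Pmon c k x) (if Nat.eqb j k then h k else 0).
Hypothesis h_neq0 : forall n, h n <> 0.

Local Notation P := (Pmon c).
Local Notation Iw := (is_RInt_weighted w).

Definition alpha (n : nat) : R := RInt_gen (fun x => x * P n x * P n x * w x) Fm Fp / h n.

Lemma is_RInt_weighted_psum0_Pmon a n : Iw (fun x => psum a 0 x * P n x) 0.
Proof.
  refine (is_RInt_weighted_ext _ _ (is_RInt_weighted_scal 0 (Pmon_orth n n))); intros; simpl; ring.
Qed.

Lemma is_RInt_weighted_psumS_Pmon a N n l :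
  Iw (fun x => psum (fun i => a i - a N * c N i) N x * P n x) l ->
  Iw (fun x => psum a (S N) x * P n x) (a N * (if Nat.eqb N n then h n else 0) + l).
Proof.
  intros H. refine (is_RInt_weighted_ext _ eq_refl
                      (is_RInt_weighted_plus (is_RInt_weighted_scal (a N) (Pmon_orth N n)) H)).
  intros x. rewrite (psum_S_Pmon c). ring.
Qed.

Lemma ex_is_RInt_weighted_psum_Pmon a N n : exists l, Iw (fun x => psum a N x * P n x) l.
Proof.
  revert a. induction N as [|N IH]; intros a; [eexists; apply is_RInt_weighted_psum0_Pmon|].
  destruct (IH (fun i => a i - a N * c N i)) as [l Hl].
  eexists. exact (is_RInt_weighted_psumS_Pmon a N n l Hl).
Qed.

Lemma is_RInt_weighted_psum_Pmon_lt a N n :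
  (N <= n)%nat -> Iw (fun x => psum a N x * P n x) 0.
Proof.
  revert a. induction N as [|N IH]; intros a Hn; [apply is_RInt_weighted_psum0_Pmon|].
  refine (is_RInt_weighted_ext _ _ (is_RInt_weighted_psumS_Pmon a N n 0 (IH _ _))).
  - reflexivity.
  - destruct (Nat.eqb_spec N n); [lia | ring].
  - lia.
Qed.

Lemma is_RInt_weighted_psum_Pmon_top a n :
  Iw (fun x => psum a (S n) x * P n x) (a n * h n).
Proof.
  refine (is_RInt_weighted_ext _ _
            (is_RInt_weighted_psumS_Pmon a n n 0 (is_RInt_weighted_psum_Pmon_lt _ n n (le_n n)))).
  - reflexivity.
  - rewrite Nat.eqb_refl. ring.
Qed.

Lemma psum_eq0_of_orth a N :
  (forall j, (j < N)%nat -> Iw (fun x => psum a N x * P j x) 0) -> forall x, psum a N x = 0.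
Proof.
  revert a. induction N as [|N IH]; intros a Horth_a x; [reflexivity|].
  assert (HaN : a N = 0).
  { pose proof (is_RInt_weighted_unique (is_RInt_weighted_psum_Pmon_top a N)
                                        (Horth_a N (Nat.lt_succ_diag_r N))) as E.
    apply Rmult_integral in E as [E | E]; [exact E | now apply h_neq0 in E]. }
  assert (Htop : forall y, psum a (S N) y = psum a N y) by (intros y; simpl; rewrite HaN; ring).
  rewrite Htop. apply IH. intros j Hj.
  refine (is_RInt_weighted_ext _ eq_refl (Horth_a j _)); [intros y; now rewrite Htop | lia].
Qed.

Lemma is_RInt_weighted_mulX_Pmon_lt j n :
  (S j < n)%nat -> Iw (fun x => x * P j x * P n x) 0.
Proof.
  intros Hjn. refine (is_RInt_weighted_ext _ eq_refl (is_RInt_weighted_psum_Pmon_lt _ _ _ Hjn)).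
  intros x. now rewrite mulX_Pmon.
Qed.

Lemma is_RInt_weighted_mulX_Pmon_succ n :
  Iw (fun x => x * P n x * P (S n) x) (h (S n)).
Proof.
  refine (is_RInt_weighted_ext _ _ (is_RInt_weighted_psum_Pmon_top (coef_mulX (Pcoef c n)) (S n))).
  - intros x. now rewrite mulX_Pmon.
  - simpl. rewrite Pcoef_diag. ring.
Qed.

Lemma is_RInt_weighted_alpha n : Iw (fun x => x * P n x * P n x) (alpha n * h n).
Proof.
  destruct (ex_is_RInt_weighted_psum_Pmon (coef_mulX (Pcoef c n)) (S (S n)) n) as [l Hl].
  assert (Hx : Iw (fun x => x * P n x * P n x) l).
  { refine (is_RInt_weighted_ext _ eq_refl Hl). intros x. now rewrite mulX_Pmon. }
  replace (alpha n * h n) with l; [exact Hx|].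
  unfold alpha. rewrite (is_RInt_gen_unique _ l Hx). field. apply h_neq0.
Qed.

Theorem Pmon_three_term n x :
  P (S n) x = (x - alpha n) * P n x - beta h n * P (n - 1) x.
Proof.
  set (g i := coef_mulX (Pcoef c n) i - Pcoef c (S n) i - alpha n * Pcoef c n i
              - beta h n * Pcoef c (n - 1) i).
  assert (Hg : forall y, psum g (S n) y
                         = y * P n y - P (S n) y - alpha n * P n y - beta h n * P (n - 1) y).
  { intros y. rewrite <- (psum_zero_tail g (S n) (S (S n))); [| | lia].
    - unfold g. rewrite !psum_minus, !psum_scal, mulX_Pmon, !psum_Pcoef by lia. reflexivity.
    - intros i Hi. unfold g. destruct i as [|i]; [lia|]. cbn [coef_mulX].
      rewrite (Pcoef_gt c n (S i)), (Pcoef_gt c (n - 1) (S i)) by lia.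
      destruct (Nat.eq_dec i n) as [-> | Hin]; [rewrite !Pcoef_diag; ring|].
      rewrite !Pcoef_gt by lia. ring. }
  enough (Hq : psum g (S n) x = 0) by (rewrite Hg in Hq; lra).
  apply psum_eq0_of_orth. intros j Hj.
  assert (HX : Iw (fun y => y * P n y * P j y)
                  (if Nat.eqb j n then alpha n * h n else if Nat.eqb (S j) n then h n else 0)).
  { destruct (Nat.eqb_spec j n) as [-> | Hjn]; [exact (is_RInt_weighted_alpha n)|].
    destruct (Nat.eqb_spec (S j) n) as [<- | Hsjn].
    - refine (is_RInt_weighted_ext _ eq_refl (is_RInt_weighted_mulX_Pmon_succ j)). intros y. ring.
    - refine (is_RInt_weighted_ext _ eq_refl (is_RInt_weighted_mulX_Pmon_lt j n _));
        [intros y; ring | lia]. }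
  refine (is_RInt_weighted_ext _ _
    (is_RInt_weighted_minus
       (is_RInt_weighted_minus (is_RInt_weighted_minus HX (Pmon_orth (S n) j))
                               (is_RInt_weighted_scal (alpha n) (Pmon_orth n j)))
       (is_RInt_weighted_scal (beta h n) (Pmon_orth (n - 1) j)))).
  - intros y. rewrite Hg. ring.
  - destruct n as [|p]; [replace j with 0%nat by lia; simpl; ring|].
    replace (S p - 1)%nat with p by lia. simpl beta.
    assert (Hcases : j = S p \/ j = p \/ (j < p)%nat) by lia.
    destruct Hcases as [-> | [-> | Hjp]];
      repeat match goal with |- context [Nat.eqb ?a ?b] => destruct (Nat.eqb_spec a b); try lia end;
      field; apply h_neq0.
Qed.

Lemma is_RInt_weighted_dPmon_lt n l :
  (n <= l)%nat -> Iw (fun x => dPmon c n x * P l x) 0.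
Proof. apply is_RInt_weighted_psum_Pmon_lt. Qed.

Lemma is_RInt_weighted_dPmon_succ n :
  Iw (fun x => dPmon c (S n) x * P n x) (INR (S n) * h n).
Proof.
  refine (is_RInt_weighted_ext _ _ (is_RInt_weighted_psum_Pmon_top (coef_deriv (Pcoef c (S n))) n)).
  - reflexivity.
  - unfold coef_deriv. rewrite Pcoef_diag. ring.
Qed.

End OrthogonalPolynomials.

Lemma sum1_ext f g M : (forall k, f k = g k) -> sum1 f M = sum1 g M.
Proof. intros Hfg. induction M as [|M IH]; simpl; [reflexivity|]. now rewrite IH, Hfg. Qed.

Lemma sum1_div f d M : sum1 (fun k => f k / d) M = sum1 f M / d.
Proof. induction M as [|M IH]; simpl; [|rewrite IH]; unfold Rdiv; ring. Qed.

Section StepWeight.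

Variables (m : nat) (om t : nat -> R) (c : nat -> nat -> R) (h : nat -> R).

Hypothesis Pmon_orth : forall j k : nat,
  is_RInt_weighted (weight m om t) (fun x => Pmon c j x * Pmon c k x)
    (if Nat.eqb j k then h k else 0).
Hypothesis h_neq0 : forall n, h n <> 0.

Local Notation P := (Pmon c).
Local Notation Iw := (is_RInt_weighted (weight m om t)).
Local Notation alpha := (alpha (weight m om t) c h).

Lemma sum_Rnk n : sum1 (fun k => Rnk om t c h n k) m = 2 * alpha n.
Proof.
  assert (Hibp : Iw (fun x => dPmon c n x * P n x + P n x * dPmon c n x - 2 * x * (P n x * P n x))
                    (0 + 0 - 2 * (alpha n * h n))).
  { pose proof (is_RInt_weighted_dPmon_lt _ _ _ Pmon_orth n n (le_n n)) as H0.
    refine (is_RInt_weighted_ext _ eq_refl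
              (is_RInt_weighted_minus (is_RInt_weighted_plus H0 H0)
                 (is_RInt_weighted_scal 2 (is_RInt_weighted_alpha _ _ _ Pmon_orth h_neq0 n)))).
    intros x. ring. }
  assert (E : sum1 (fun k => om k * (P n (t k) * P n (t k) * exp (- t k ^ 2))) m
              = 2 * (alpha n * h n))
    by (pose proof (is_RInt_weighted_unique (is_RInt_weighted_Pmon_ibp m om t c n n) Hibp); lra).
  rewrite (sum1_ext _ (fun k => om k * (P n (t k) * P n (t k) * exp (- t k ^ 2)) / h n)),
          sum1_div, E.
  - field. apply h_neq0.
  - intros k. unfold Rnk, Rdiv. ring.
Qed.

Lemma sum_rnk_succ n : sum1 (fun k => rnk om t c h (S n) k) m + INR (S n) = 2 * h (S n) / h n.
Proof.
  assert (Hibp : Iw (fun x => dPmon c n x * P (S n) x + P n x * dPmon c (S n) x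
                              - 2 * x * (P n x * P (S n) x))
                    (0 + INR (S n) * h n - 2 * h (S n))).
  { refine (is_RInt_weighted_ext _ eq_refl
              (is_RInt_weighted_minus
                 (is_RInt_weighted_plus
                    (is_RInt_weighted_dPmon_lt _ _ _ Pmon_orth n (S n) (Nat.le_succ_diag_r n))
                    (is_RInt_weighted_dPmon_succ _ _ _ Pmon_orth n))
                 (is_RInt_weighted_scal 2 (is_RInt_weighted_mulX_Pmon_succ _ _ _ Pmon_orth n)))).
    intros x. ring. }
  assert (E : sum1 (fun k => om k * (P n (t k) * P (S n) (t k) * exp (- t k ^ 2))) m
              = 2 * h (S n) - INR (S n) * h n)
    by (pose proof (is_RInt_weighted_unique
                      (is_RInt_weighted_Pmon_ibp m om t c n (S n)) Hibp); lra).
  rewrite (sum1_ext _ (fun k => om k * (P n (t k) * P (S n) (t k) * exp (- t k ^ 2)) / h n)),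
          sum1_div, E.
  - field. apply h_neq0.
  - intros k. unfold rnk, Rdiv. ring.
Qed.

Lemma rnk_succ n k :
  rnk om t c h (S n) k
  = - rnk om t c h n k + (t k - / 2 * sum1 (fun j => Rnk om t c h n j) m) * Rnk om t c h n k.
Proof.
  rewrite sum_Rnk. replace (/ 2 * (2 * alpha n)) with (alpha n) by field.
  unfold rnk, Rnk. rewrite (Pmon_three_term _ _ _ Pmon_orth h_neq0 n (t k)).
  destruct n as [|p]; simpl beta.
  - field. apply h_neq0.
  - replace (S p - 1)%nat with p by lia. field. split; apply h_neq0.
Qed.

Lemma rnk_sq n k :
  rnk om t c h (S n) k ^ 2 = Rnk om t c h (S n) k * Rnk om t c h n k * (h (S n) / h n).
Proof. unfold rnk, Rnk. field. split; apply h_neq0. Qed.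

Lemma Rnk_first n :
  (sum1 (fun k => rnk om t c h (S n) k) m + INR (S n)) * Rnk om t c h n 1 <> 0 ->
  Rnk om t c h (S n) 1
  = 2 * rnk om t c h (S n) 1 ^ 2
    / ((sum1 (fun k => rnk om t c h (S n) k) m + INR (S n)) * Rnk om t c h n 1).
Proof.
  rewrite sum_rnk_succ. intros Hd. apply Rmult_neq_0_reg in Hd as [_ HR].
  rewrite rnk_sq. field. repeat split; auto.
Qed.

Lemma Rnk_ratio n k :
  rnk om t c h (S n) 1 ^ 2 * Rnk om t c h n k <> 0 ->
  Rnk om t c h (S n) k
  = rnk om t c h (S n) k ^ 2 * Rnk om t c h n 1
    / (rnk om t c h (S n) 1 ^ 2 * Rnk om t c h n k) * Rnk om t c h (S n) 1.
Proof.
  rewrite !rnk_sq. intros Hd.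
  apply Rmult_neq_0_reg in Hd as [Hd Hk]. apply Rmult_neq_0_reg in Hd as [Hd _].
  apply Rmult_neq_0_reg in Hd as [H1 H1'].
  field. repeat split; auto.
Qed.

Lemma Rnk_zero k :
  Rnk om t c h 0 k = om k * exp (- t k ^ 2) / RInt_gen (weight m om t) Fm Fp.
Proof.
  replace (RInt_gen (weight m om t) Fm Fp) with (h 0%nat).
  - unfold Rnk, Pmon. simpl. field. apply h_neq0.
  - symmetry. apply (is_RInt_gen_unique (V := R_CompleteNormedModule)).
    refine (is_RInt_gen_ext_pointwise _ _ _ _ (Pmon_orth 0 0)). intros x. unfold Pmon. simpl. ring.
Qed.

End StepWeight.

Theorem lemma2p7
  (m : nat) (t om : nat -> R) (c : nat -> nat -> R) (h : nat -> R)
  (Hm : (1 <= m)%nat)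
  (Ht : forall k : nat, (1 <= k)%nat -> (k < m)%nat -> t k < t (S k))
  (Hom : forall l : nat, (l <= m)%nat -> 0 <= sum0 om l)
  (Hw : exists x : R, weight m om t x <> 0)
  (Hh : forall n : nat, 0 < h n)
  (Horth : forall j k : nat,
     is_RInt_gen (fun x => Pmon c j x * Pmon c k x * weight m om t x)
       (Rbar_locally m_infty) (Rbar_locally p_infty)
       (if Nat.eqb j k then h k else 0)) :
  (forall n k : nat, (1 <= k)%nat -> (k <= m)%nat ->
     rnk om t c h (S n) k =
       - rnk om t c h n k
       + (t k - / 2 * sum1 (fun j => Rnk om t c h n j) m) * Rnk om t c h n k)
  /\
  (forall n : nat, (1 <= n)%nat ->
     (sum1 (fun k => rnk om t c h n k) m + INR n) * Rnk om t c h (n - 1) 1 <> 0 ->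
     Rnk om t c h n 1 =
       2 * (rnk om t c h n 1) ^ 2
       / ((sum1 (fun k => rnk om t c h n k) m + INR n) * Rnk om t c h (n - 1) 1))
  /\
  (forall n k : nat, (1 <= n)%nat -> (2 <= k)%nat -> (k <= m)%nat ->
     (rnk om t c h n 1) ^ 2 * Rnk om t c h (n - 1) k <> 0 ->
     Rnk om t c h n k =
       (rnk om t c h n k) ^ 2 * Rnk om t c h (n - 1) 1
       / ((rnk om t c h n 1) ^ 2 * Rnk om t c h (n - 1) k)
       * Rnk om t c h n 1)
  /\
  (forall k : nat, (1 <= k)%nat -> (k <= m)%nat ->
     Rnk om t c h 0 k =
       om k * exp (- (t k) ^ 2)
       / RInt_gen (weight m om t) (Rbar_locally m_infty) (Rbar_locally p_infty))
  /\
  (forall k : nat, rnk om t c h 0 k = 0).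
Proof.
  assert (h_neq0 : forall n, h n <> 0) by (intros n; specialize (Hh n); lra).
  split; [|split; [|split; [|split]]].
  - intros n k _ _. now apply rnk_succ.
  - intros [|n] Hn; [lia|]. replace (S n - 1)%nat with n by lia.
    now apply Rnk_first.
  - intros [|n] k Hn _ _; [lia|]. replace (S n - 1)%nat with n by lia.
    now apply Rnk_ratio.
  - intros k _ _. now apply Rnk_zero.
  - reflexivity.
Qed.
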